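(* Consider one-dimensional $L_2$-regularized linear regression trained by plain SGD with learning rate $\lambda>0$ and batch size $S$, with input variance $a>0$, target $u$ and weight decay $\gamma$, and write $k:=a+\gamma$ (assume $k\neq0$ and $2k-\lambda[k^2+\frac2Sa^2]\neq0$). Then the expected training loss and test loss are $$L_{\rm train}=\frac{a\gamma}{2k}\cdot\frac{2k-\lambda\left[k^2+\frac2Sa(a-\gamma)\right]}{2k-\lambda\left[k^2+\frac2Sa^2\right]}u^2,\qquad L_{\rm test}=\frac{a\gamma^2}{2k}\cdot\frac{2-\lambda k}{2k-\lambda\left[k^2+\frac2Sa^2\right]}u^2.$$
   Context: Loss (as $N\to\infty$): $L_\Gamma(w)=\frac12a(w-u)^2+\frac12\gamma w^2$, with data $x\sim\mathcal N(0,a)$ and labels $y=ux$. The stationary distribution of $w$ has mean $w^*=au/k$ and variance $\Sigma$ determined by $\lambda\cdot2k\Sigma-\lambda^2k^2\Sigma=\lambda^2C$, where the averaged minibatch noise variance is $C=\frac1S\left(2a^2\Sigma+\frac{2a^2\gamma^2u^2}{k^2}\right)$. $L_{\rm train}:=\mathbb{E}_w[L_\Gamma(w)]$ and $L_{\rm test}:=\frac12a\,\mathbb{E}_w[(w-u)^2]$. *)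

From HB Require Import structures.
From mathcomp Require Import all_boot all_order all_algebra.
From mathcomp Require Import all_classical all_reals all_analysis.
Set Implicit Arguments. Unset Strict Implicit. Unset Printing Implicit Defensive.
Import Order.TTheory GRing.Theory Num.Theory.
Local Open Scope ring_scope.

Definition LGamma {R : realType} (a u gamma w : R) : R :=
  2^-1 * a * (w - u) ^+ 2 + 2^-1 * gamma * w ^+ 2.

Definition Ltest_integrand {R : realType} (a u w : R) : R :=
  2^-1 * a * (w - u) ^+ 2.

(* Averaged minibatch noise variance C = 1/S (2 a^2 Sigma + 2 a^2 gamma^2 u^2 / k^2) *)
Definition noiseC {R : realType} (S : nat) (a u gamma k Sigma : R) : R :=
  (S%:R)^-1 * (2 * a ^+ 2 * Sigma + 2 * a ^+ 2 * gamma ^+ 2 * u ^+ 2 / k ^+ 2).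

From HB Require Import structures.
From mathcomp Require Import all_boot all_order all_algebra.
From mathcomp Require Import all_classical all_reals all_analysis.
From mathcomp Require Import ring.
Set Implicit Arguments. Unset Strict Implicit. Unset Printing Implicit Defensive.
Import Order.TTheory GRing.Theory Num.Theory.
Local Open Scope ring_scope.

(* Both losses are quadratic polynomials in w, so their expectations depend on
   the stationary distribution only through its mean a u / k and variance.
   Dividing the stationarity condition by lambda makes it linear in Sigma,
   which gives Sigma = 2 lambda a^2 gamma^2 u^2 / (S k^2 D) with
   D = 2k - lambda (k^2 + 2 a^2 / S); substituting this leaves a rational
   identity. *)

Section QuadraticExpectation.
Context (R : realType) (d : measure_display) (T : measurableType d).
Variables (P : probability T R) (w : T -> R) (m Sigma : R).
Hypotheses (hw2 : w \in Lfun P 2%:E) (hmean : ('E_P[w] = m%:E)%E)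
  (hvar : variance P w = Sigma%:E).

Lemma expectation_sqr : ('E_P[w \* w] = (Sigma + m ^+ 2)%:E)%E.
Proof.
have ww : w \* w \in Lfun P 1 by exact: Lfun2_mul_Lfun1.
have := varianceE hw2; rewrite hvar hmean.
have -> : (w ^+ 2 = w \* w)%R by apply/funext => t; rewrite /= expr2.
have := expectation_fin_num ww.
case: ('E_P[w \* w])%E => // r _ /=; rewrite -EFinD => -[->]; congr EFin; ring.
Qed.

Lemma expectation_quadratic (c2 c1 c0 : R) :
  ('E_P[fun t => (c2 * w t ^+ 2 + c1 * w t + c0)%R])%E
    = (c2 * (Sigma + m ^+ 2) + c1 * m + c0)%:E.
Proof.
have w1 : w \in Lfun P 1 by apply: Lfun_subset12 => //; exact: fin_num_measure.
have ww : w \* w \in Lfun P 1 by exact: Lfun2_mul_Lfun1.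
have c01 : cst c0 \in Lfun P 1 by exact: Lfun_cst.
have -> : (fun t => c2 * w t ^+ 2 + c1 * w t + c0)
    = (c2 \o* (w \* w)) \+ (c1 \o* w) \+ cst c0.
  by apply/funext => t /=; ring.
rewrite expectationD ?rpredD ?Lfun_scale //.
rewrite expectationD ?Lfun_scale //.
by rewrite !expectationZl // expectation_sqr hmean expectation_cst -!EFinM -!EFinD.
Qed.

End QuadraticExpectation.

Lemma LGamma_quadratic (R : realType) (a u gamma w : R) :
  LGamma a u gamma w = (a + gamma) / 2 * w ^+ 2 + - (a * u) * w + a * u ^+ 2 / 2.
Proof. by rewrite /LGamma; field. Qed.

Lemma Ltest_integrand_quadratic (R : realType) (a u w : R) :
  Ltest_integrand a u w = a / 2 * w ^+ 2 + - (a * u) * w + a * u ^+ 2 / 2.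
Proof. by rewrite /Ltest_integrand; field. Qed.

Lemma stationary_variance (R : realType) (lambda : R) (S : nat) (a u gamma k Sigma : R) :
  lambda != 0 -> (0 < S)%N -> k != 0 ->
  2 * k - lambda * (k ^+ 2 + 2 / S%:R * a ^+ 2) != 0 ->
  lambda * (2 * k * Sigma) - lambda ^+ 2 * k ^+ 2 * Sigma
    = lambda ^+ 2 * noiseC S a u gamma k Sigma ->
  Sigma = 2 * lambda * a ^+ 2 * gamma ^+ 2 * u ^+ 2
          / (S%:R * k ^+ 2 * (2 * k - lambda * (k ^+ 2 + 2 / S%:R * a ^+ 2))).
Proof.
move=> hl0 S_gt0 hk0 hD hstat.
have hS0 : (S%:R : R) != 0 by rewrite pnatr_eq0 -lt0n.
set D := 2 * k - _ in hD *.
have linear_in_Sigma : Sigma * D = 2 * lambda * a ^+ 2 * gamma ^+ 2 * u ^+ 2 / (S%:R * k ^+ 2).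
  apply: (mulfI hl0).
  transitivity (lambda * (2 * k * Sigma) - lambda ^+ 2 * k ^+ 2 * Sigma
                - lambda ^+ 2 * (2 / S%:R * a ^+ 2) * Sigma); first by rewrite /D; ring.
  by rewrite hstat /noiseC; field; rewrite hS0 hk0.
by rewrite -[Sigma](mulfK hD) linear_in_Sigma; field; rewrite hS0 hk0 hD.
Qed.

Theorem corollary2 (R : realType) (d : measure_display) (T : measurableType d)
    (P : probability T R) (w : T -> R)
    (lambda : R) (S : nat) (a u gamma Sigma : R)
    (hlambda : 0 < lambda) (hS : (0 < S)%N) (ha : 0 < a)
    (hk : a + gamma != 0)
    (hden : 2 * (a + gamma) - lambda * ((a + gamma) ^+ 2 + 2 / S%:R * a ^+ 2) != 0)
    (hw2 : w \in Lfun P 2%:E)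
    (hmean : ('E_P[w] = (a * u / (a + gamma))%:E)%E)
    (hvar : variance P w = Sigma%:E)
    (hSigma : lambda * (2 * (a + gamma) * Sigma) - lambda ^+ 2 * (a + gamma) ^+ 2 * Sigma
              = lambda ^+ 2 * noiseC S a u gamma (a + gamma) Sigma) :
  let k := a + gamma in
  ('E_P[fun t => LGamma a u gamma (w t)])%E
    = (a * gamma / (2 * k)
       * ((2 * k - lambda * (k ^+ 2 + 2 / S%:R * a * (a - gamma)))
          / (2 * k - lambda * (k ^+ 2 + 2 / S%:R * a ^+ 2))) * u ^+ 2)%:E
  /\
  ('E_P[fun t => Ltest_integrand a u (w t)])%E
    = (a * gamma ^+ 2 / (2 * k)
       * ((2 - lambda * k) / (2 * k - lambda * (k ^+ 2 + 2 / S%:R * a ^+ 2))) * u ^+ 2)%:E.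
Proof.
move=> k; subst k.
have hS0 : (S%:R : R) != 0 by rewrite pnatr_eq0 -lt0n.
(* [field] clears the [2 / S] inside D and asks for [D * S != 0] expanded. *)
have hDS : 2 * (a + gamma) * S%:R - lambda * ((a + gamma) ^+ 2 * S%:R + 2 * a ^+ 2) != 0.
  rewrite (_ : _ - _ = (2 * (a + gamma) - lambda * ((a + gamma) ^+ 2 + 2 / S%:R * a ^+ 2)) * S%:R).
    exact: mulf_neq0.
  by field.
have hSigma_closed := stationary_variance (lt0r_neq0 hlambda) hS hk hden hSigma.
split.
- under eq_fun do rewrite LGamma_quadratic.
  rewrite (expectation_quadratic hw2 hmean hvar) hSigma_closed.
  by congr EFin; field; rewrite hS0 hk hDS.
- under eq_fun do rewrite Ltest_integrand_quadratic.
  rewrite (expectation_quadratic hw2 hmean hvar) hSigma_closed.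
  by congr EFin; field; rewrite hS0 hk hDS.
Qed.
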